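(* Let $\gamma$ be a gauge on $\mathbb{R}^d$ with skewness $\sigma$. Let $A\subset\mathbb{R}^d$ be finite with positive weights summing to $1$, let $C\subseteq A$ with $w_C<\frac{1}{1+\sigma}$, and let $D=A\setminus C$. Let $C_c$ be obtained by moving the points of $C$ to arbitrary positions (keeping their weights), and let $x$ be a Fermat–Weber point of the weighted set $D\cup C_c$. Then $x\in\mathrm{EH}_\gamma(D)$.
   Context: A gauge $\gamma$ on $\mathbb{R}^d$ is the Minkowski functional of a convex compact set $B_\gamma$ with the origin in its interior (not necessarily symmetric); $\gamma^\circ(p)=\max\{\langle p,x\rangle:\gamma(x)=1\}$ is the dual gauge with unit ball $B_{\gamma^\circ}$; the skewness is $\sigma=\sup_{x\neq0}\gamma(x)/\gamma(-x)$. A Fermat–Weber point of a finite positively weighted set is a minimizer of $x\mapsto\sum_a w_a\gamma(x-a)$. For $p\in B_{\gamma^\circ}$ define $N(p)$ as follows: if $\gamma^\circ(p)=1$, $N(p)$ is the convex cone $\mathbb{R}_{\ge0}F(p)$ generated by the exposed face $F(p)=\{x\in B_\gamma:\langle p,x\rangle=1\}$ (equivalently $\mathbb{R}_{\ge0}\partial\gamma^\circ(p)$); if $\gamma^\circ(p)<1$, $N(p)=\{0\}$. For a finite set $S$ and a family $\pi=(p_s)_{s\in S}$ of points of $B_{\gamma^\circ}$, let $C_\pi=\bigcap_{s\in S}(s+N(p_s))$; a nonempty such $C_\pi$ is an elementary convex set for $S$. The elementary hull $\mathrm{EH}_\gamma(S)$ is the union of all bounded elementary convex sets for $S$. *)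

From HB Require Import structures.
From mathcomp Require Import all_boot all_order all_algebra.
From mathcomp Require Import all_classical all_reals all_analysis.
Set Implicit Arguments. Unset Strict Implicit. Unset Printing Implicit Defensive.
Import Order.TTheory GRing.Theory Num.Theory.
Import numFieldNormedType.Exports.
Local Open Scope classical_set_scope.
Local Open Scope ring_scope.

Section Gauges.
Variables (R : realType) (d : nat).
Notation V := 'rV[R]_d.

Definition dotp (p x : V) : R := \sum_(i < d) p 0 i * x 0 i.

Definition gauge_body (B : set V) : Prop :=
  [/\ (forall x y (t : R), B x -> B y -> 0 <= t <= 1 -> B (t *: x + (1 - t) *: y)),
      compact B & nbhs (0 : V) B].

Definition gauge (B : set V) (x : V) : R :=
  inf [set t : R | 0 < t /\ exists2 b, B b & x = t *: b].

Definition gball (B : set V) : set V := [set x | gauge B x <= 1].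

Definition dual_gauge (B : set V) (p : V) : R :=
  sup [set dotp p x | x in [set x | gauge B x = 1]].

Definition dual_ball (B : set V) : set V := [set p | dual_gauge B p <= 1].

Definition skewness (B : set V) : R :=
  sup [set gauge B x / gauge B (- x) | x in [set x : V | x != 0]].

Definition exposed_face (B : set V) (p : V) : set V :=
  [set x | gball B x /\ dotp p x = 1].

Definition Ncone (B : set V) (p : V) : set V :=
  if `[< dual_gauge B p = 1 >] then
    [set y | exists t : R, exists2 z, exposed_face B p z & 0 <= t /\ y = t *: z]
  else [set 0].

Definition elem_set (B : set V) (S : set V) (pi : V -> V) : set V :=
  [set x | forall s, S s -> Ncone B (pi s) (x - s)].

Definition elem_hull (B : set V) (S : set V) : set V :=
  [set x | exists pi : V -> V,
      (forall s, S s -> dual_ball B (pi s)) /\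
      elem_set B S pi x /\ bounded_set (elem_set B S pi)].

Definition fermat_weber (B : set V) (I : finType) (pts : I -> V) (w : I -> R)
  (x : V) : Prop :=
  forall y : V, \sum_i w i * gauge B (x - pts i) <= \sum_i w i * gauge B (y - pts i).

End Gauges.

(* Theorem 7 (robustness of the elementary hull).  Let x be a Fermat–Weber point
   of the weighted family in which the points of C were moved to arbitrary
   positions, and write z_i = x - pts_i.

   Minimality of x gives subgradients p_i of the gauge
      at z_i with  sum_i w_i <p_i, v> = 0  for every v.  We obtain this sum rule
      without a subdifferential calculus: on the product space (R^d)^I the
      directional derivative of  U |-> sum_i w_i gamma(z_i + U_i), infimised along
      the constant families, is a sublinear functional; a finite-dimensional
      Hahn–Banach argument yields a linear minorant, whose components are the
      w_i p_i.
   2. Each subgradient satisfies gamma°(p_i) <= 1, and z_i lies in N(p_i) with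
      gamma°(p_i) = 1 when z_i <> 0.  Choosing pi(a_i) = p_i for i outside C
      (or 0 when x = a_i) puts x in the elementary set C_pi.
   3. For y in C_pi, gamma(y - a_i) <= <p_i, y - a_i> for i outside C; summing,
      and bounding the C-part by w_C gamma(-y) <= w_C sigma gamma(y), gives
      (1 - w_C (1 + sigma)) gamma(y) <= const, so C_pi is bounded because
      w_C < 1 / (1 + sigma). *)

From HB Require Import structures.
From mathcomp Require Import all_boot all_order all_algebra.
From mathcomp Require Import all_classical all_reals all_analysis.
From mathcomp Require Import ring lra.
Set Implicit Arguments. Unset Strict Implicit. Unset Printing Implicit Defensive.
Import Order.TTheory GRing.Theory Num.Theory.
Import numFieldNormedType.Exports.
Local Open Scope classical_set_scope.
Local Open Scope ring_scope.

(* A set whose elements are bounded by a nonnegative x has supremum at most x;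
   the sign condition covers the empty set, whose supremum is 0. *)
Lemma sup_le_nonneg (R : realType) (E : set R) (x : R) :
  0 <= x -> (forall y, E y -> y <= x) -> sup E <= x.
Proof.
move=> x0 Ex; have [ne|empty] := pselect (E !=set0); first exact: ge_sup.
suff -> : E = set0 by rewrite sup0.
by apply/seteqP; split => // y Ey; apply: empty; exists y.
Qed.

Section GaugeBasics.
Variables (R : realType) (d : nat) (B : set 'rV[R]_d).
Hypothesis hB : gauge_body B.
Local Notation V := 'rV[R]_d.
Local Notation g := (gauge B).

Lemma gauge_body_ball : exists2 r : R, 0 < r & forall x : V, `|x| < r -> B x.
Proof.
case: hB => _ _ /nbhs_ballP [r r0 Br]; exists r => // x xr.
by apply: Br; rewrite -ball_normE /= sub0r normrN.
Qed.

Lemma gauge_body_bounded : exists2 M : R, 0 < M & forall x : V, B x -> `|x| <= M.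
Proof.
case: hB => _ /compact_bounded [M [_ BM]] _.
exists (`|M| + 1) => [|x Bx]; first by rewrite ltr_pwDr // normr_ge0.
by apply: BM => //; rewrite (le_lt_trans (ler_norm M)) // ltrDl.
Qed.

Definition scalings (x : V) := [set t : R | 0 < t /\ exists2 b, B b & x = t *: b].

Lemma scalings_lbound x : has_lbound (scalings x).
Proof. by exists 0 => t [/ltW]. Qed.

Lemma scalings_large x t r : 0 < r -> (forall y : V, `|y| < r -> B y) ->
  0 < t -> `|x| < t * r -> scalings x t.
Proof.
move=> r0 Br t0 xtr; split => //; exists (t^-1 *: x).
  by apply: Br; rewrite normrZ ger0_norm ?invr_ge0 ?(ltW t0) // ltr_pdivrMl.
by rewrite scalerA divff ?scale1r // gt_eqF.
Qed.

Lemma scalings_neq0 x : scalings x !=set0.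
Proof.
case: gauge_body_ball => r r0 Br; exists ((`|x| + 1) / r).
apply: scalings_large Br _ _ => //; first by rewrite divr_gt0 // ltr_pwDr.
by rewrite divfK ?gt_eqF // ltrDl.
Qed.

Lemma gauge_le_scaling x t : scalings x t -> g x <= t.
Proof. by move=> xt; apply: ge_inf (scalings_lbound x) _ xt. Qed.

(* The norm is bounded by a multiple of the gauge, since B is bounded. *)
Lemma norm_le_gauge : exists2 M : R, 0 < M & forall x : V, `|x| <= M * g x.
Proof.
case: gauge_body_bounded => M M0 BM; exists M => // x.
rewrite -ler_pdivrMl //; apply: lb_le_inf (scalings_neq0 x) _ => t [t0 [b Bb ->]].
rewrite normrZ (ger0_norm (ltW t0)) ler_pdivrMl // [t * _]mulrC.
by rewrite ler_wpM2r ?(ltW t0) // BM.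
Qed.

Lemma gaugeZ x s : 0 < s -> g (s *: x) = s * g x.
Proof.
have le s' y : 0 < s' -> g (s' *: y) <= s' * g y.
  move=> s'0; rewrite mulrC -ler_pdivrMr //.
  apply: lb_le_inf (scalings_neq0 y) _ => t [t0 [b Bb ->]].
  rewrite ler_pdivrMr //; apply: gauge_le_scaling; split; first by rewrite mulr_gt0.
  by exists b => //; rewrite scalerA mulrC.
move=> s0; apply/le_anti; rewrite le //=.
have := le s^-1 (s *: x) ltac:(by rewrite invr_gt0).
by rewrite scalerA mulVf ?gt_eqF // scale1r ler_pdivlMl.
Qed.

Lemma gauge0 : g 0 = 0.
Proof. by have := gaugeZ 0 (ltr0Sn R 1); rewrite scaler0 => h; lra. Qed.

Lemma gaugeZ_ge0 x s : 0 <= s -> g (s *: x) = s * g x.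
Proof.
rewrite le_eqVlt => /orP [/eqP <-|]; last exact: gaugeZ.
by rewrite scale0r gauge0 mul0r.
Qed.

(* The gauge is bounded by a multiple of the norm, since B contains a ball. *)
Lemma gauge_le_norm : exists2 r : R, 0 < r & forall x : V, g x <= `|x| / r.
Proof.
case: gauge_body_ball => r r0 Br; exists (r / 2) => [|x]; first by rewrite divr_gt0.
have [->|x0] := eqVneq x 0; first by rewrite gauge0 normr0 mul0r.
apply: gauge_le_scaling; apply: scalings_large Br _ _ => //.
  by rewrite divr_gt0 ?normr_gt0 // divr_gt0.
rewrite invf_div mulrA divfK ?gt_eqF // -[X in X < _]mulr1 ltr_pM2l ?normr_gt0 //.
by rewrite ltr1n.
Qed.

(* Subadditivity comes from the convexity of B. *)
Lemma gaugeD x y : g (x + y) <= g x + g y.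
Proof.
case: hB => convB _ _.
rewrite -lerBlDr; apply: lb_le_inf (scalings_neq0 x) _ => t1 [t10 [b1 Bb1 ->]].
rewrite lerBlDr [t1 + _]addrC -lerBlDr.
apply: lb_le_inf (scalings_neq0 y) _ => t2 [t20 [b2 Bb2 ->]].
rewrite lerBlDr [t2 + _]addrC; apply: gauge_le_scaling.
have tp : 0 < t1 + t2 by rewrite addr_gt0.
split => //; exists ((t1 / (t1 + t2)) *: b1 + (1 - t1 / (t1 + t2)) *: b2).
  apply: convB => //; rewrite divr_ge0 ?(ltW t10) ?(ltW tp) //=.
  by rewrite ler_pdivrMr // mul1r lerDl (ltW t20).
have -> : 1 - t1 / (t1 + t2) = t2 / (t1 + t2) by field; rewrite gt_eqF.
by rewrite scalerDr !scalerA !mulrA !(mulrC (t1 + t2)) !mulfK // gt_eqF.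
Qed.

Lemma gauge_le_subr x y : g x <= g (x - y) + g y.
Proof. by have := gaugeD (x - y) y; rewrite subrK. Qed.

Lemma gauge_convex (x y : V) l : 0 <= l <= 1 ->
  g (l *: x + (1 - l) *: y) <= l * g x + (1 - l) * g y.
Proof.
case/andP=> l0 l1; apply: le_trans (gaugeD _ _) _.
by rewrite !gaugeZ_ge0 // subr_ge0.
Qed.

Lemma gauge_gt0 x : x != 0 -> 0 < g x.
Proof.
case: norm_le_gauge => M M0 xM x0; apply: lt_le_trans (_ : 0 < `|x| / M) _.
  by rewrite divr_gt0 ?normr_gt0.
by rewrite ler_pdivrMr // mulrC xM.
Qed.

(* gamma(-y) <= sigma gamma(y): the ratios defining the skewness are bounded
   because the gauge is comparable to the norm. *)
Lemma gauge_opp_le_skew (y : V) : g (- y) <= skewness B * g y.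
Proof.
have [->|y0] := eqVneq y 0; first by rewrite oppr0 gauge0 mulr0.
rewrite -ler_pdivrMr ?gauge_gt0 //; apply: ub_le_sup.
  case: gauge_le_norm => r r0 gr; case: norm_le_gauge => M M0 nM.
  exists (M / r) => _ [u /= u0 <-].
  rewrite ler_pdivrMr ?gauge_gt0 ?oppr_eq0 //; apply: le_trans (gr u) _.
  by rewrite mulrAC ler_pM2r ?invr_gt0 // -normrN nM.
by exists (- y); rewrite /= ?oppr_eq0 ?opprK.
Qed.

End GaugeBasics.

Section DotProduct.
Variables (R : realType) (d : nat).
Local Notation V := 'rV[R]_d.

Lemma dotpDr (p x y : V) : dotp p (x + y) = dotp p x + dotp p y.
Proof. by rewrite /dotp -big_split; apply: eq_bigr => i _; rewrite mxE mulrDr. Qed.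

Lemma dotpZr (p x : V) (t : R) : dotp p (t *: x) = t * dotp p x.
Proof. by rewrite /dotp mulr_sumr; apply: eq_bigr => i _; rewrite mxE mulrCA. Qed.

Lemma dotpNr (p x : V) : dotp p (- x) = - dotp p x.
Proof. by rewrite -scaleN1r dotpZr mulN1r. Qed.

Lemma dotpBr (p x y : V) : dotp p (x - y) = dotp p x - dotp p y.
Proof. by rewrite dotpDr dotpNr. Qed.

Lemma dotpZl (p x : V) (t : R) : dotp (t *: p) x = t * dotp p x.
Proof. by rewrite /dotp mulr_sumr; apply: eq_bigr => i _; rewrite mxE mulrA. Qed.

Lemma dotp0l (x : V) : dotp 0 x = 0.
Proof. by rewrite /dotp big1 // => i _; rewrite mxE mul0r. Qed.

Lemma dotp0r (p : V) : dotp p 0 = 0.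
Proof. by rewrite /dotp big1 // => i _; rewrite mxE mulr0. Qed.

End DotProduct.

Section DualGauge.
Variables (R : realType) (d : nat) (B : set 'rV[R]_d).
Hypothesis hB : gauge_body B.
Local Notation V := 'rV[R]_d.
Local Notation g := (gauge B).

Lemma dual_gauge_le1 (p : V) : (forall v, dotp p v <= g v) -> dual_gauge B p <= 1.
Proof. by move=> pg; apply: sup_le_nonneg => // _ [v /= gv1 <-]; rewrite -gv1. Qed.

Lemma dual_gauge_eq1 (p z : V) : (forall v, dotp p v <= g v) ->
  g z = 1 -> dotp p z = 1 -> dual_gauge B p = 1.
Proof.
move=> pg gz pz; apply/le_anti; rewrite dual_gauge_le1 //= -pz.
by apply: ub_le_sup; [exists 1 => _ [v /= gv1 <-]; rewrite -gv1 | exists z].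
Qed.

Lemma dual_gauge0 : dual_gauge B 0 = 0.
Proof.
apply/le_anti/andP; split; first by apply: sup_le_nonneg => // _ [v _ <-]; rewrite dotp0l.
have [[_ [v gv _]]|empty] := pselect ([set dotp 0 x | x in [set x | g x = 1]] !=set0).
  rewrite -(dotp0l v); apply: ub_le_sup; last by exists v.
  by exists 0 => _ [u _ <-]; rewrite dotp0l.
rewrite /dual_gauge; suff -> : [set dotp 0 x | x in [set x | g x = 1]] = set0 by rewrite sup0.
by apply/seteqP; split => // y Ey; apply: empty; exists y.
Qed.

Lemma Ncone0 : Ncone B 0 = [set 0].
Proof. by rewrite /Ncone dual_gauge0 asboolF // => /eqP; rewrite eq_sym oner_eq0. Qed.

Lemma Ncone_gauge_le (p y : V) : dual_gauge B p = 1 -> Ncone B p y -> g y <= dotp p y.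
Proof.
move=> p1; rewrite /Ncone p1 asboolT // => -[t [u [gu pu] [t0 ->]]].
rewrite dotpZr pu mulr1 (gaugeZ_ge0 hB) //.
by rewrite -[X in _ <= X]mulr1 ler_wpM2l.
Qed.

Definition gauge_subgrad (p z : V) := forall u, dotp p u <= g (z + u) - g z.

Section Subgradient.
Variables (p z : V).
Hypothesis pz : gauge_subgrad p z.

Lemma subgrad_dominated v : dotp p v <= g v.
Proof. by apply: le_trans (pz v) _; rewrite lerBlDl gaugeD. Qed.

Lemma subgrad_at : dotp p z = g z.
Proof.
apply/le_anti; rewrite subgrad_dominated /=.
by have := pz (- z); rewrite subrr (gauge0 hB) dotpNr; lra.
Qed.

Lemma subgrad_dual_le1 : dual_gauge B p <= 1.
Proof. exact/dual_gauge_le1/subgrad_dominated. Qed.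

(* Away from the origin a subgradient attains the value 1 at the point
   z / gamma(z) of the unit sphere, so gamma°(p) = 1 and z lies in N(p). *)
Lemma subgrad_dual_eq1 : z != 0 -> dual_gauge B p = 1.
Proof.
move=> z0; have gz := gauge_gt0 hB z0.
apply: (dual_gauge_eq1 (z := (g z)^-1 *: z)); first exact: subgrad_dominated.
  by rewrite (gaugeZ hB) ?invr_gt0 // mulVf ?gt_eqF.
by rewrite dotpZr subgrad_at mulVf ?gt_eqF.
Qed.

Lemma subgrad_Ncone : z != 0 -> Ncone B p z.
Proof.
move=> z0; have gz := gauge_gt0 hB z0.
rewrite /Ncone subgrad_dual_eq1 // asboolT //.
exists (g z), ((g z)^-1 *: z); last first.
  by split; [exact: ltW | rewrite scalerA divff ?gt_eqF // scale1r].
split; last by rewrite dotpZr subgrad_at mulVf ?gt_eqF.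
by rewrite /gball /= (gaugeZ hB) ?invr_gt0 // mulVf ?gt_eqF.
Qed.

End Subgradient.
End DualGauge.

Section Sublinear.
Variables (R : realType) (E : lmodType R).

Definition sublinear (phi : E -> R) :=
  (forall u v, phi (u + v) <= phi u + phi v) /\
  (forall s u, 0 < s -> phi (s *: u) <= s * phi u).

Lemma sublinear0 phi : sublinear phi -> phi 0 = 0.
Proof.
case=> phiD phiZ; have := phiD 0 0; have := phiZ 2^-1 0 ltac:(by rewrite invr_gt0).
by rewrite addr0 scaler0 => h1 h2; apply/le_anti/andP; split; nra.
Qed.

Lemma sublinearZ phi s u : sublinear phi -> 0 <= s -> phi (s *: u) = s * phi u.
Proof.
move=> phi_sub; have [_ phiZ] := phi_sub; rewrite le_eqVlt => /orP [/eqP <-|s0].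
  by rewrite scale0r mul0r sublinear0.
apply/le_anti; rewrite phiZ //=.
have := phiZ s^-1 (s *: u) ltac:(by rewrite invr_gt0).
by rewrite scalerA mulVf ?gt_eqF // scale1r ler_pdivlMl.
Qed.

Section ExtensionStep.
Variables (phi : E -> R) (v : E).
Hypothesis phi_sub : sublinear phi.

(* The one-dimensional step of the Hahn–Banach theorem: extend_along is a
   sublinear functional below u |-> phi (u + t v) - t phi (v) for every t, so
   any linear minorant of it extends, by the value phi (v) on v, to a linear
   minorant of phi. *)
Definition extend_along (u : E) :=
  inf [set phi (u + t *: v) - t * phi v | t in [set: R]].

Lemma extend_along_lb u t : - phi (- u) <= phi (u + t *: v) - t * phi v.
Proof.
have [phiD _] := phi_sub; have utu : u + t *: v + - u = t *: v.
  by rewrite addrAC subrr add0r.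
have := phiD (u + t *: v) (- u); rewrite utu; have [t0|t0] := leP 0 t.
  by rewrite sublinearZ //; lra.
have := phiD (t *: v) ((- t) *: v).
rewrite -scalerDl subrr scale0r sublinear0 // (@sublinearZ phi (- t) v phi_sub); lra.
Qed.

Lemma extend_along_le u t : extend_along u <= phi (u + t *: v) - t * phi v.
Proof.
apply: ge_inf; last by exists t.
by exists (- phi (- u)) => _ [s _ <-]; apply: extend_along_lb.
Qed.

Lemma extend_along_sublinear : sublinear extend_along.
Proof.
have [phiD phiZ] := phi_sub.
have ne u : [set phi (u + t *: v) - t * phi v | t in [set: R]] !=set0.
  by exists (phi (u + 0 *: v) - 0 * phi v), 0.
split.
  move=> u1 u2; rewrite -lerBlDr; apply: lb_le_inf (ne u1) _ => _ [t1 _ <-].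
  rewrite lerBlDr [_ + extend_along u2]addrC -lerBlDr.
  apply: lb_le_inf (ne u2) _ => _ [t2 _ <-].
  rewrite lerBlDr; apply: le_trans (extend_along_le (u1 + u2) (t1 + t2)) _.
  have := phiD (u1 + t1 *: v) (u2 + t2 *: v).
  rewrite addrACA -scalerDl; lra.
move=> s u s0; rewrite mulrC -ler_pdivrMr //.
apply: lb_le_inf (ne u) _ => _ [t _ <-].
rewrite ler_pdivrMr //; apply: le_trans (extend_along_le (s *: u) (s * t)) _.
rewrite -scalerA -scalerDr sublinearZ ?(ltW s0) //; lra.
Qed.

End ExtensionStep.

(* Finite-dimensional Hahn–Banach: a sublinear functional has a linear minorant
   on the span of finitely many vectors e k, given by its coefficients c k. *)
Lemma sublinear_minorant (K : eqType) (e : K -> E) (s : seq K) : uniq s ->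
  forall phi, sublinear phi -> exists c : K -> R, forall lam : K -> R,
    \sum_(k <- s) lam k * c k <= phi (\sum_(k <- s) lam k *: e k).
Proof.
elim: s => [|k0 s IH] /= s_uniq phi phi_sub.
  by exists (fun=> 0) => lam; rewrite !big_nil sublinear0.
case/andP: s_uniq => k0s s_uniq.
have [c cle] := IH s_uniq _ (extend_along_sublinear (e k0) phi_sub).
exists (fun k => if k == k0 then phi (e k0) else c k) => lam.
rewrite !big_cons eqxx.
rewrite (eq_big_seq (fun k => lam k * c k)); last first.
  by move=> k ks; case: eqP => // ek; move: k0s; rewrite -ek ks.
have := @extend_along_le phi (e k0) phi_sub (\sum_(k <- s) lam k *: e k) (lam k0).
by rewrite [_ + lam k0 *: e k0]addrC; have := cle lam; lra.
Qed.

End Sublinear.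

Section DirectionalDerivative.
Variables (R : realType) (E : lmodType R) (F : E -> R).
Hypothesis F_convex : forall (X Y : E) (l : R), 0 <= l <= 1 ->
  F (l *: X + (1 - l) *: Y) <= l * F X + (1 - l) * F Y.

Definition slope (t : R) (U : E) := (F (t *: U) - F 0) / t.

(* By convexity the difference quotient is nondecreasing in t ... *)
Lemma slope_mono s t X : 0 < s -> s <= t -> slope s X <= slope t X.
Proof.
move=> s0 st; have t0 : 0 < t := lt_le_trans s0 st.
have q01 : 0 <= s / t <= 1.
  by rewrite divr_ge0 ?(ltW s0) ?(ltW t0) //= ler_pdivrMr // mul1r.
have := F_convex (t *: X) 0 q01; rewrite scaler0 addr0 scalerA divfK ?gt_eqF //.
rewrite /slope ler_pdivrMr // => h.
have -> : (F (t *: X) - F 0) / t * s = s / t * F (t *: X) - s / t * F 0.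
  by field; rewrite gt_eqF.
by move: h; set q := s / t; lra.
Qed.

Lemma slopeZ t s X : 0 < t -> 0 < s -> slope t (s *: X) = s * slope (t * s) X.
Proof. by move=> t0 s0; rewrite /slope scalerA; field; rewrite !gt_eqF // mulr_gt0. Qed.

Lemma slopeD t X Y : 0 < t -> slope t (X + Y) <= slope (2 * t) X + slope (2 * t) Y.
Proof.
move=> t0; have half : 0 <= (2 : R)^-1 <= 1 by lra.
have := F_convex ((2 * t) *: X) ((2 * t) *: Y) half.
have -> : 1 - 2^-1 = 2^-1 :> R by field.
have -> : 2^-1 *: (2 * t *: X) + 2^-1 *: (2 * t *: Y) = t *: (X + Y).
  by rewrite -!scalerDr scalerA mulrA mulVf ?pnatr_eq0 // mul1r.
rewrite /slope => h.
have t2 : 0 < 2 * t by rewrite mulr_gt0.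
rewrite ler_pdivrMr //.
have -> : ((F (2 * t *: X) - F 0) / (2 * t) + (F (2 * t *: Y) - F 0) / (2 * t)) * t
  = 2^-1 * F (2 * t *: X) + 2^-1 * F (2 * t *: Y) - F 0.
  by field; rewrite gt_eqF.
lra.
Qed.

(* Infimising the difference quotients over t > 0 and over translations along
   a subspace S gives a sublinear functional below F - F 0 and nonpositive on
   S; the lower bound is what makes the infimum meaningful. *)
Variable S : set E.
Hypothesis S0 : S 0.
Hypothesis SD : forall Y1 Y2, S Y1 -> S Y2 -> S (Y1 + Y2).
Hypothesis SZ : forall s Y, S Y -> S (s *: Y).
Hypothesis slope_lbound : forall U, exists m,
  forall t Y, 0 < t -> S Y -> m <= slope t (U + Y).

Definition dirderiv (U : E) :=
  inf [set slope p.1 (U + p.2) | p in [set p : R * E | 0 < p.1 /\ S p.2]].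

Lemma dirderiv_le t U Y : 0 < t -> S Y -> dirderiv U <= slope t (U + Y).
Proof.
move=> t0 SY; apply: ge_inf; last by exists (t, Y).
have [m mle] := slope_lbound U.
by exists m => _ [[t' Y'] /= [t'0 SY'] <-]; apply: mle.
Qed.

Lemma dirderiv_sublinear : sublinear dirderiv.
Proof.
have ne U : [set slope p.1 (U + p.2) | p in [set p : R * E | 0 < p.1 /\ S p.2]] !=set0.
  by exists (slope 1 (U + 0)), (1, 0) => //=; split.
split.
  move=> U1 U2; rewrite -lerBlDr.
  apply: lb_le_inf (ne U1) _ => _ [[t1 Y1] /= [t10 SY1] <-].
  rewrite lerBlDr [_ + dirderiv U2]addrC -lerBlDr.
  apply: lb_le_inf (ne U2) _ => _ [[t2 Y2] /= [t20 SY2] <-].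
  rewrite lerBlDr; set m := Num.min t1 t2.
  have m0 : 0 < m by rewrite lt_min t10 t20.
  have mh : 0 < m / 2 by rewrite divr_gt0.
  apply: le_trans (dirderiv_le (U1 + U2) mh (SD SY1 SY2)) _.
  rewrite addrACA; apply: le_trans (slopeD _ _ mh) _.
  rewrite mulrC divfK ?pnatr_eq0 //.
  have mt1 : m <= t1 by rewrite ge_min lexx.
  have mt2 : m <= t2 by rewrite ge_min lexx orbT.
  have := slope_mono (U1 + Y1) m0 mt1; have := slope_mono (U2 + Y2) m0 mt2; lra.
move=> s U s0; rewrite mulrC -ler_pdivrMr //.
apply: lb_le_inf (ne U) _ => _ [[t Y] /= [t0 SY] <-].
rewrite ler_pdivrMr //; have ts0 : 0 < t / s by rewrite divr_gt0.
apply: le_trans (dirderiv_le (s *: U) ts0 (SZ s SY)) _.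
by rewrite -scalerDr slopeZ // divfK ?gt_eqF // mulrC.
Qed.

Lemma dirderiv_le_diff U : dirderiv U <= F U - F 0.
Proof.
by apply: le_trans (dirderiv_le U ltr01 S0) _; rewrite /slope addr0 scale1r divr1.
Qed.

Lemma dirderiv_le0 Y : S Y -> dirderiv Y <= 0.
Proof.
move=> SY; apply: le_trans (dirderiv_le Y ltr01 (SZ (-1) SY)) _.
by rewrite scaleN1r subrr /slope scaler0 subrr mul0r.
Qed.

End DirectionalDerivative.

Section FermatWeberOptimality.
Variables (R : realType) (d : nat) (B : set 'rV[R]_d).
Hypothesis hB : gauge_body B.
Local Notation V := 'rV[R]_d.
Local Notation g := (gauge B).
Variables (I : finType) (w : I -> R) (z : I -> V).
Hypothesis w_gt0 : forall i, 0 < w i.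
Local Notation E := {ffun I -> V}.

(* The weighted gauge cost with each z i displaced by U i.  When z i = x - a_i,
   the constant family v corresponds to moving x by v, so minimality of x reads
   [cost_min] below. *)
Definition fw_cost (U : E) := \sum_i w i * g (z i + U i).

Definition const_family (v : V) : E := [ffun=> v].

Hypothesis cost_min : forall v, fw_cost 0 <= fw_cost (const_family v).

Lemma fw_cost_convex (U U' : E) l : 0 <= l <= 1 ->
  fw_cost (l *: U + (1 - l) *: U') <= l * fw_cost U + (1 - l) * fw_cost U'.
Proof.
move=> l01; rewrite /fw_cost !mulr_sumr -big_split /=; apply: ler_sum => i _.
rewrite !ffunE.
have -> : z i + (l *: U i + (1 - l) *: U' i) = l *: (z i + U i) + (1 - l) *: (z i + U' i).
  by rewrite !scalerDr addrACA -scalerDl [l + _]addrC subrK scale1r.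
rewrite mulrCA (mulrCA (1 - l)) -mulrDr ler_wpM2l ?(ltW (w_gt0 i)) //.
exact: gauge_convex.
Qed.

Lemma const_family0 : range const_family 0.
Proof. by exists 0 => //; apply/ffunP => i; rewrite !ffunE. Qed.

Lemma const_familyD Y1 Y2 : range const_family Y1 -> range const_family Y2 ->
  range const_family (Y1 + Y2).
Proof.
by move=> [v1 _ <-] [v2 _ <-]; exists (v1 + v2) => //; apply/ffunP => i; rewrite !ffunE.
Qed.

Lemma const_familyZ s Y : range const_family Y -> range const_family (s *: Y).
Proof. by move=> [v _ <-]; exists (s *: v) => //; apply/ffunP => i; rewrite !ffunE. Qed.

(* Minimality of the cost along the constant families bounds the difference
   quotients from below, by the gauge cost of - U. *)
Lemma fw_slope_lbound U : exists m, forall t Y, 0 < t -> range const_family Y ->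
  m <= slope fw_cost t (U + Y).
Proof.
exists (- \sum_i w i * g (- U i)) => t _ t0 [v _ <-].
rewrite /slope ler_pdivlMr // mulNr.
suff : fw_cost (const_family (t *: v)) - t * \sum_i w i * g (- U i)
    <= fw_cost (t *: (U + const_family v)).
  by have := cost_min (t *: v); lra.
rewrite /fw_cost mulr_sumr -sumrB; apply: ler_sum => i _; rewrite !ffunE.
have := gauge_le_subr hB (z i + t *: v) (- (t *: U i)).
rewrite opprK -scalerN (gaugeZ_ge0 hB (- U i)) ?(ltW t0) // -addrA -scalerDr.
rewrite [v + _]addrC (mulrCA t) -mulrBr => h.
by rewrite ler_wpM2l ?(ltW (w_gt0 i)) //; lra.
Qed.

Definition single_family (i : I) (u : V) : E := [ffun j => if j == i then u else 0].

Lemma fw_cost_single i u :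
  fw_cost (single_family i u) - fw_cost 0 = w i * (g (z i + u) - g (z i)).
Proof.
rewrite /fw_cost -sumrB (bigD1 i) //= big1 => [|j ji]; last first.
  by rewrite !ffunE (negbTE ji) addr0 subrr.
by rewrite !ffunE eqxx !addr0 -mulrBr.
Qed.

Local Notation K := (I * 'I_d)%type.

Definition unit_family (k : K) : E := [ffun i => if i == k.1 then delta_mx 0 k.2 else 0].

Lemma unit_family_decomp (U : E) :
  \sum_(k <- index_enum K) U k.1 0 k.2 *: unit_family k = U.
Proof.
apply/ffunP => i; apply/matrixP => i0 j; rewrite sum_ffunE summxE.
rewrite (eq_bigr (fun k => if k == (i, j) then U i 0 j else 0)).
  by rewrite -big_mkcond big_pred1_eq ord1.
move=> [k1 k2] _; rewrite !ffunE mxE /=.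
case: (eqVneq i k1) => [<-|ik1].
  rewrite mxE ord1 eqxx /= xpair_eqE eqxx /=.
  by case: (eqVneq k2 j) => [->|_]; rewrite ?eqxx ?mulr1 ?mulr0 // eq_sym; case: eqP.
by rewrite mxE mulr0 xpair_eqE; case: eqVneq => //= e; rewrite e eqxx in ik1.
Qed.

(* Optimality condition: a linear minorant of the directional derivative of
   the cost yields subgradients p i of the gauge at z i whose weighted sum
   vanishes. *)
Lemma fw_cost_subgradients : exists p : I -> V,
  (forall i, gauge_subgrad B (p i) (z i)) /\ (forall v, \sum_i w i * dotp (p i) v = 0).
Proof.
pose D := dirderiv fw_cost (range const_family).
have D_sub : sublinear D := dirderiv_sublinear fw_cost_convex const_family0
  const_familyD const_familyZ fw_slope_lbound.
have [c cle] := sublinear_minorant unit_family (index_enum_uniq K) D_sub.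
pose P i : V := \row_j c (i, j).
have PD (U : E) : \sum_i dotp (P i) (U i) <= D U.
  have := cle (fun k => U k.1 0 k.2); rewrite unit_family_decomp.
  suff -> : \sum_i dotp (P i) (U i) = \sum_(k <- index_enum K) U k.1 0 k.2 * c k by [].
  rewrite (eq_bigr (fun i => \sum_j U i 0 j * c (i, j))); last first.
    by move=> i _; apply: eq_bigr => j _; rewrite mxE mulrC.
  by rewrite pair_bigA; apply: eq_bigr => -[i j].
have wP i v : w i * dotp ((w i)^-1 *: P i) v = dotp (P i) v.
  by rewrite dotpZl mulrA divff ?gt_eqF // mul1r.
exists (fun i => (w i)^-1 *: P i); split.
  move=> i u; rewrite -(ler_pM2l (w_gt0 i)) wP -fw_cost_single.
  apply: le_trans (dirderiv_le_diff const_family0 fw_slope_lbound _).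
  have := PD (single_family i u); rewrite (bigD1 i) //= big1 => [|j ji]; last first.
    by rewrite ffunE (negbTE ji) dotp0r.
  by rewrite ffunE eqxx addr0.
have P_le0 v : \sum_i dotp (P i) v <= 0.
  have Sv : range const_family (const_family v) by exists v.
  have := PD (const_family v); rewrite (eq_bigr (fun i => dotp (P i) v)) => [PDv|i _].
    exact: le_trans PDv (dirderiv_le0 const_familyZ fw_slope_lbound Sv).
  by rewrite ffunE.
move=> v; rewrite (eq_bigr (fun i => dotp (P i) v)) => [|i _]; last exact: wP.
apply/le_anti; rewrite P_le0 /= -oppr_le0 -sumrN.
by rewrite (eq_bigr (fun i => dotp (P i) (- v))) ?P_le0 // => i _; rewrite dotpNr.
Qed.

End FermatWeberOptimality.

Lemma fermat_weber_subgradients (R : realType) (d : nat) (B : set 'rV[R]_d)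
    (I : finType) (pts : I -> 'rV[R]_d) (w : I -> R) (x : 'rV[R]_d) :
  gauge_body B -> (forall i, 0 < w i) -> fermat_weber B pts w x ->
  exists p : I -> 'rV[R]_d, (forall i, gauge_subgrad B (p i) (x - pts i)) /\
    (forall v, \sum_i w i * dotp (p i) v = 0).
Proof.
move=> hB w_gt0 x_fw; apply: fw_cost_subgradients => // v; rewrite /fw_cost.
rewrite [X in X <= _](eq_bigr (fun i => w i * gauge B (x - pts i))) => [|i _]; last first.
  by rewrite /= ffunE addr0.
rewrite [X in _ <= X](eq_bigr (fun i => w i * gauge B (x + v - pts i))) => [|i _]; last first.
  by rewrite /const_family ffunE addrAC.
exact: x_fw.
Qed.

Lemma bounded_of_norm_le (K : realType) (W : normedModType K) (A : set W) (M : K) :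
  (forall y, A y -> `|y| <= M) -> bounded_set A.
Proof.
move=> AM; exists M; split; first by rewrite num_real.
by move=> M' MM' y Ay; apply: le_trans (AM y Ay) (ltW MM').
Qed.

Section ElementaryHullBound.
Variables (R : realType) (d : nat) (B : set 'rV[R]_d).
Hypothesis hB : gauge_body B.
Local Notation V := 'rV[R]_d.
Local Notation g := (gauge B).
Variables (I : finType) (a : I -> V) (w : I -> R) (C : {set I}) (p : I -> V) (x : V).
Hypothesis a_inj : injective a.
Hypothesis w_gt0 : forall i, 0 < w i.
Hypothesis w_sum1 : \sum_i w i = 1.
Hypothesis wC_small : \sum_(i in C) w i < 1 / (1 + skewness B).
Hypothesis p_dominated : forall i v, dotp (p i) v <= g v.
Hypothesis p_subgrad : forall i, i \notin C -> gauge_subgrad B (p i) (x - a i).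
Hypothesis p_balanced : forall v, \sum_i w i * dotp (p i) v = 0.

Local Notation wC := (\sum_(i in C) w i).
Local Notation sigma := (skewness B).
Local Notation D := (a @` [set i | i \notin C]).

Lemma hull_margin_gt0 : 0 < 1 - wC * (1 + sigma).
Proof.
have wC0 : 0 <= wC by apply: sumr_ge0 => i _; exact: ltW.
have s0 : 0 < 1 + sigma.
  rewrite ltNge; apply/negP => s0.
  have : 1 / (1 + sigma) <= 0 by rewrite div1r invr_le0.
  by have := wC_small; lra.
by have := wC_small; rewrite ltr_pdivlMr // => h; lra.
Qed.

(* The key estimate: if y satisfies the normal-cone inequalities at the points
   of D, the balance of the p i transfers the C-part to gamma(-y), whence a
   bound on gamma(y) with the positive margin above. *)
Lemma elem_gauge_bound y :
  (forall i, i \notin C -> g (y - a i) <= dotp (p i) (y - a i)) ->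
  (1 - wC * (1 + sigma)) * g y
    <= \sum_(i | i \notin C) w i * (g (a i) - dotp (p i) (a i)).
Proof.
move=> y_cone.
have wD : \sum_(i | i \notin C) w i = 1 - wC.
  by rewrite -w_sum1 [in RHS](bigID (mem C)) /= addrAC subrr add0r.
have upper : \sum_(i | i \notin C) w i * g (y - a i)
    <= \sum_(i | i \notin C) w i * dotp (p i) y
       - \sum_(i | i \notin C) w i * dotp (p i) (a i).
  rewrite -sumrB; apply: ler_sum => i iC.
  by rewrite -mulrBr -dotpBr ler_wpM2l ?(ltW (w_gt0 i)) // y_cone.
have balance : \sum_(i | i \notin C) w i * dotp (p i) y
    = \sum_(i in C) w i * dotp (p i) (- y).
  have -> : \sum_(i in C) w i * dotp (p i) (- y) = - \sum_(i in C) w i * dotp (p i) y.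
    by rewrite -sumrN; apply: eq_bigr => i _; rewrite dotpNr mulrN.
  by have := p_balanced y; rewrite (bigID (mem C)) /=; lra.
have C_part : \sum_(i in C) w i * dotp (p i) (- y) <= wC * (sigma * g y).
  rewrite mulr_suml; apply: ler_sum => i _; rewrite ler_wpM2l ?(ltW (w_gt0 i)) //.
  exact: le_trans (p_dominated i (- y)) (gauge_opp_le_skew hB y).
have lower : (1 - wC) * g y - \sum_(i | i \notin C) w i * g (a i)
    <= \sum_(i | i \notin C) w i * g (y - a i).
  rewrite -wD mulr_suml -sumrB; apply: ler_sum => i _.
  by rewrite -mulrBr ler_wpM2l ?(ltW (w_gt0 i)) // lerBlDr gauge_le_subr.
have -> : \sum_(i | i \notin C) w i * (g (a i) - dotp (p i) (a i))
    = \sum_(i | i \notin C) w i * g (a i) - \sum_(i | i \notin C) w i * dotp (p i) (a i).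
  by rewrite -sumrB; apply: eq_bigr => i _; rewrite mulrBr.
have -> : (1 - wC * (1 + sigma)) * g y = (1 - wC) * g y - wC * (sigma * g y) by ring.
lra.
Qed.

Definition hull_pi (s : V) : V :=
  if [pick i | (i \notin C) && (a i == s)] is Some i
  then (if x == a i then 0 else p i) else 0.

Lemma hull_pi_a i : i \notin C -> hull_pi (a i) = if x == a i then 0 else p i.
Proof.
move=> iC; rewrite /hull_pi; case: pickP => [j /andP [_ /eqP /a_inj -> //]|].
by move=> /(_ i); rewrite iC eqxx.
Qed.

Lemma hull_pi_dual s : D s -> dual_ball B (hull_pi s).
Proof.
move=> [i /= iC <-]; rewrite /dual_ball /= hull_pi_a //.
case: eqP => _; first by rewrite dual_gauge0 ler01.
exact: (subgrad_dual_le1 hB (p_subgrad iC)).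
Qed.

Lemma hull_set_x : elem_set B D hull_pi x.
Proof.
move=> _ [i /= iC <-]; rewrite hull_pi_a //; case: eqP => [<-|/eqP xa].
  by rewrite Ncone0 subrr.
by apply: (subgrad_Ncone hB (p_subgrad iC)); rewrite subr_eq0.
Qed.

Lemma hull_set_bounded : bounded_set (elem_set B D hull_pi).
Proof.
have Da i : i \notin C -> D (a i) by move=> iC; exists i.
have [[i iC xa]|x_off] := pselect (exists2 i, i \notin C & x = a i).
  apply: (bounded_of_norm_le (M := `|a i|)) => y Cy.
  have := Cy (a i) (Da i iC); rewrite hull_pi_a // xa eqxx Ncone0 => /eqP.
  by rewrite subr_eq0 => /eqP ->.
have x_ne i : i \notin C -> x != a i.
  by move=> iC; apply/eqP => xa; apply: x_off; exists i.
case: (norm_le_gauge hB) => M M0 nM.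
pose K := \sum_(i | i \notin C) w i * (g (a i) - dotp (p i) (a i)).
apply: (bounded_of_norm_le (M := M * (K / (1 - wC * (1 + sigma))))) => y Cy.
apply: le_trans (nM y) _; rewrite ler_wpM2l ?(ltW M0) //.
rewrite ler_pdivlMr ?hull_margin_gt0 // mulrC; apply: elem_gauge_bound => i iC.
have xa0 : x - a i != 0 by rewrite subr_eq0 x_ne.
apply: (Ncone_gauge_le hB (subgrad_dual_eq1 hB (p_subgrad iC) xa0)).
by have := Cy (a i) (Da i iC); rewrite hull_pi_a // (negbTE (x_ne i iC)).
Qed.

Lemma elem_hull_of_subgradients : elem_hull B D x.
Proof.
exists hull_pi; split; first exact: hull_pi_dual.
by split; [exact: hull_set_x | exact: hull_set_bounded].
Qed.

End ElementaryHullBound.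

Theorem mainTheorem7 (R : realType) (d : nat) (B : set 'rV[R]_d)
  (I : finType) (a : I -> 'rV[R]_d) (w : I -> R) (C : {set I})
  (c : I -> 'rV[R]_d) (x : 'rV[R]_d) :
  gauge_body B ->
  injective a ->
  (forall i, 0 < w i) ->
  \sum_i w i = 1 ->
  \sum_(i in C) w i < 1 / (1 + skewness B) ->
  fermat_weber B (fun i => if i \in C then c i else a i) w x ->
  elem_hull B (a @` [set i | i \notin C]) x.
Proof.
move=> hB a_inj w_gt0 w_sum1 wC_small x_fw.
have [p [p_sub p_bal]] := fermat_weber_subgradients hB w_gt0 x_fw.
apply: (elem_hull_of_subgradients hB a_inj w_gt0 w_sum1 wC_small (p := p)) => //.
- by move=> i v; apply: subgrad_dominated (p_sub i) v.
- by move=> i iC; have := p_sub i; rewrite (negbTE iC).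
Qed.
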